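(* For all $\alpha\ge1/2$ and $\rho>1/2$, $$\sup_{k\in\mathbb Z\setminus\{0\}}|k|^{2+2\alpha}\sum_{*}|k_1k_2k_3|^{-2\alpha}\frac{1}{|k-k_1|^{2\rho}|k-k_2|^{2\rho}|k-k_3|^{2\rho}}<+\infty,$$ where $\sum_*$ denotes the sum over $(k_1,k_2,k_3)\in\mathbb Z^3$ with $k_1+k_2+k_3=k$, $k_1k_2k_3\ne0$ and $k_2\ne k$, $k_3\ne k$. *)

From HB Require Import structures.
From mathcomp Require Import all_boot all_order all_algebra.
From mathcomp Require Import all_classical all_reals all_analysis.
Set Implicit Arguments. Unset Strict Implicit. Unset Printing Implicit Defensive.
Import Order.TTheory GRing.Theory Num.Theory.
Local Open Scope ring_scope.
Local Open Scope classical_set_scope.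

Definition starset (k : int) : set (int * int * int) :=
  [set p | let '(k1, k2, k3) := p in
           [/\ k1 + k2 + k3 = k, k1 * k2 * k3 != 0, k2 != k & k3 != k]].

Definition summand (R : realType) (a r : R) (k : int) (p : int * int * int) : R :=
  let '(k1, k2, k3) := p in
  1 / (`|(k1 * k2 * k3)%:~R : R| `^ (2 * a))
  * (1 / (`|(k - k1)%:~R : R| `^ (2 * r)
          * `|(k - k2)%:~R : R| `^ (2 * r)
          * `|(k - k3)%:~R : R| `^ (2 * r))).

From HB Require Import structures.
From mathcomp Require Import all_boot all_order all_algebra.
From mathcomp Require Import all_classical all_reals all_analysis.
From mathcomp Require Import ring lra zify.
Set Implicit Arguments. Unset Strict Implicit. Unset Printing Implicit Defensive.
Import Order.TTheory GRing.Theory Num.Theory.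
Local Open Scope ring_scope.
Local Open Scope classical_set_scope.

(* Put K = |k|, x_i = |k_i|, y_i = |k - k_i|, s = 2a >= 1 and t = 2r > 1.
   Since K <= x1 + x2 + x3, some x_c >= K/3 absorbs K^s at the price of 3^s,
   and each of the two other factors K / (x^s y^t), where K <= x + y, is at
   most 2 (x^-t + y^-t).  Hence K^(2+s) times a summand is at most 8 3^s times
   a sum of six products |u|^-t |v|^-t, where each (u, v) is an injective
   function of (k1, k2, k3) on the index set, so that each of the six sums is
   at most (\sum_(j in Z) |j|^-t)^2 < +oo. *)

Section RiemannSeries.
Variable R : realType.

Lemma ln_div_subr1_ge (m : R) : 1 < m -> m^-1 <= ln (m / (m - 1)).
Proof.
move=> m1.
have m0 : 0 < m by lra.
have -> : m / (m - 1) = (1 - m^-1)^-1.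
  by rewrite -invf_div mulrBl mulfV ?gt_eqF // mul1r.
rewrite lnV ?posrE; last by rewrite subr_gt0 invf_lt1.
by rewrite lerNr; apply: le_ln1Dx; rewrite ltrN2 invf_lt1.
Qed.

(* Discrete form of [m^-(1+d) <= \int_(m-1)^m x^-(1+d) dx]. *)
Lemma riemannR_le_telescope (d m : R) : 0 < d -> 1 < m ->
  (m `^ (1 + d))^-1 <= (((m - 1) `^ d)^-1 - (m `^ d)^-1) / d.
Proof.
move=> d0 m1.
have m0 : 0 < m by lra.
have m10 : 0 < m - 1 by lra.
set p := m `^ d; set q := (m - 1) `^ d.
have p0 : 0 < p by apply: powR_gt0.
have q0 : 0 < q by apply: powR_gt0.
have -> : m `^ (1 + d) = m * p.
  by rewrite powRD ?powRr1 ?(ltW m0) //; apply/implyP => _; rewrite gt_eqF.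
have pq : q * (1 + d / m) <= p.
  have -> : p = q * (m / (m - 1)) `^ d.
    by rewrite -powRM ?ltW ?divr_gt0 // mulrC divfK // gt_eqF.
  rewrite ler_pM2l // /powR gt_eqF ?divr_gt0 //.
  apply: le_trans (expR_ge1Dx _).
  by rewrite lerD2l ler_pM2l // ln_div_subr1_ge.
rewrite -subr_ge0.
have -> : (q^-1 - p^-1) / d - (m * p)^-1 = (p - q * (1 + d / m)) / (p * q * d).
  by field; rewrite !gt_eqF.
by rewrite divr_ge0 ?subr_ge0 // !mulr_ge0 // ltW.
Qed.

Lemma riemannR_partial_sum_le (t : R) n : 1 < t ->
  \sum_(i < n) riemannR t i <= 1 + (t - 1)^-1.
Proof.
move=> t1; set d := t - 1.
have d0 : 0 < d by rewrite subr_gt0.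
have tE : t = 1 + d by rewrite /d addrC subrK.
have partial_sum_le m : \sum_(i < m.+1) riemannR t i <= 1 + (1 - ((m.+1)%:R `^ d)^-1) / d.
  elim: m => [|m IH].
    by rewrite big_ord1 /riemannR !powR1 invr1 subrr mul0r addr0.
  have m1 : 1 < m.+2%:R :> R by rewrite ltr1n.
  have step := riemannR_le_telescope d0 m1.
  rewrite -tE -natr1 addrK natr1 in step.
  rewrite big_ord_recr /=; apply: le_trans (lerD IH step) _.
  by rewrite !mulrBl mul1r; lra.
case: n => [|n]; first by rewrite big_ord0 addr_ge0 // invr_ge0 ltW.
apply: le_trans (partial_sum_le n) _.
by rewrite lerD2l mulrBl mul1r gerBl divr_ge0 ?invr_ge0 ?powR_ge0 ?ltW.
Qed.

End RiemannSeries.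

Section ExtendedSums.
Variable R : realType.
Local Open Scope ereal_scope.

Lemma esum_nat_le (u : nat -> R) (M : R) :
  (forall n, (0 <= u n)%R) -> (forall n, (\sum_(i < n) u i <= M)%R) ->
  \esum_(i in [set: nat]) (u i)%:E <= M%:E.
Proof.
move=> u0 uM; rewrite -nneseries_esumT; last by move=> n; rewrite lee_fin.
apply: lime_le; first by apply: is_cvg_nneseries => n _ _; rewrite lee_fin.
by apply: nearW => n; rewrite /= big_mkord sumEFin lee_fin.
Qed.

Lemma esumZl_le (T : choiceType) (S : set T) (c : \bar R) (f : T -> \bar R) :
  0 <= c -> (forall x, 0 <= f x) ->
  \esum_(i in S) (c * f i) <= c * \esum_(i in S) f i.
Proof.
move=> c0 f0; apply: ge_ereal_sup => _ [X [finX XS] <-].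
rewrite -ge0_mule_fsumr //; apply: lee_wpmul2l => //.
by apply: ereal_sup_ubound; exists X.
Qed.

Lemma ge0_esumZl (T : choiceType) (S : set T) (c : R) (f : T -> \bar R) :
  (0 <= c)%R -> (forall x, 0 <= f x) ->
  \esum_(i in S) (c%:E * f i) = c%:E * \esum_(i in S) f i.
Proof.
move=> c0 f0; move: c0; rewrite le_eqVlt => /predU1P[<-|c_gt0].
  by rewrite mul0e esum1 // => i _; rewrite mul0e.
apply/le_anti/andP; split; first by apply: esumZl_le; rewrite // lee_fin ltW.
rewrite -lee_pdivlMl //; apply: le_trans (esumZl_le _ _ _); last 2 first.
- by rewrite lee_fin invr_ge0 ltW.
- by move=> i; apply: mule_ge0; rewrite // lee_fin ltW.
by apply: le_esum => i _; rewrite muleA -EFinM mulVf ?gt_eqF ?mul1e.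
Qed.

Lemma esum_comp_inj_le (T U : choiceType) (S : set T) (e : T -> U) (h : U -> \bar R) :
  (forall u, 0 <= h u) -> set_inj S e ->
  \esum_(i in S) h (e i) <= \esum_(u in [set: U]) h u.
Proof.
move=> h0 einj; rewrite -(esum_image S e h einj) [leLHS]esum_mkcond.
by apply: le_esum => u _; case: ifP.
Qed.

Lemma esum_prodT_le (I J : choiceType) (f : I -> \bar R) (g : J -> \bar R) (a b : \bar R) :
  (forall i, 0 <= f i) -> (forall j, 0 <= g j) ->
  \esum_(i in [set: I]) f i <= a -> \esum_(j in [set: J]) g j <= b ->
  \esum_(q in [set: I * J]) (f q.1 * g q.2) <= a * b.
Proof.
move=> f0 g0 fa gb.
have -> : [set: I * J] = [set: I] `*`` (fun=> [set: J]) by apply/seteqP; split.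
rewrite -(esum_esum (a := fun i j => f i * g j)); last by move=> i j _ _; apply: mule_ge0.
apply: (@le_trans _ _ (\esum_(i in [set: I]) (b * f i))).
  apply: le_esum => i _; rewrite muleC.
  apply: le_trans (esumZl_le _ (f0 i) g0) _.
  exact: lee_wpmul2l.
have b0 : 0 <= b by apply: le_trans gb; apply: esum_ge0.
apply: le_trans (esumZl_le _ b0 f0) _.
by rewrite muleC; apply: lee_wpmul2r.
Qed.

End ExtendedSums.

Section InversePowerSums.
Variable R : realType.

(* [|0|^t = 0] and [0^-1 = 0], so [invpow_abs t 0 = 0]: the sum over [int] is
   two copies of the Riemann series. *)
Definition invpow_abs (t : R) (j : int) : R := (`|j%:~R : R| `^ t)^-1.

Definition zeta_bound (t : R) : R := 2 * (1 + (t - 1)^-1).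

Lemma invpow_abs_ge0 t j : 0 <= invpow_abs t j.
Proof. by rewrite invr_ge0 powR_ge0. Qed.

Lemma esum_invpow_abs_le t : 1 < t ->
  (\esum_(j in [set: int]) (invpow_abs t j)%:E <= (zeta_bound t)%:E)%E.
Proof.
move=> t1; have g0 j : (0 <= (invpow_abs t j)%:E)%E by rewrite lee_fin invpow_abs_ge0.
rewrite (esumID [set j : int | 0 <= j]) //.
have -> : [set: int] `&` [set j | 0 <= j] = Posz @` [set: nat].
  apply/seteqP; split => [j [_ /= j0]|j [n _ <-]] //.
  by exists `|j|%N => //; rewrite gez0_abs.
have -> : [set: int] `&` ~` [set j | 0 <= j] = Negz @` [set: nat].
  apply/seteqP; split => [j [_ /= j0]|j [n _ <-]] //.
  by case: j j0 => // n _; exists n.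
rewrite !esum_image; [|by move=> x y _ _ []..].
rewrite /zeta_bound mulrDl mul1r EFinD.
apply: leeD; apply: esum_nat_le => n; rewrite ?invpow_abs_ge0 //;
  apply: le_trans (riemannR_partial_sum_le n t1).
- apply: (@le_trans _ _ (\sum_(i < n.+1) invpow_abs t i)).
    by rewrite big_ord_recr /= lerDl invpow_abs_ge0.
  rewrite big_ord_recl /= {1}/invpow_abs normr0 powR0 ?invr0 ?add0r; last first.
    by rewrite gt_eqF // (lt_trans ltr01).
  by apply: ler_sum => i _; rewrite /invpow_abs ger0_norm.
- by apply: ler_sum => i _; rewrite /invpow_abs /= normrN ger0_norm.
Qed.

Lemma esum_invpow_abs_pair_le (T : choiceType) (S : set T) (e : T -> int * int) t :
  1 < t -> set_inj S e ->
  (\esum_(p in S) (invpow_abs t (e p).1 * invpow_abs t (e p).2)%:E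
    <= (zeta_bound t * zeta_bound t)%:E)%E.
Proof.
move=> t1 einj.
have g0 j : (0 <= (invpow_abs t j)%:E)%E by rewrite lee_fin invpow_abs_ge0.
under eq_esum do rewrite EFinM.
set h := fun q : int * int => ((invpow_abs t q.1)%:E * (invpow_abs t q.2)%:E)%E.
have h0 q : (0 <= h q)%E by apply: mule_ge0.
apply: le_trans (esum_comp_inj_le h0 einj) _.
by rewrite EFinM; apply: (esum_prodT_le g0 g0); apply: esum_invpow_abs_le.
Qed.

End InversePowerSums.

Section PointwiseBound.
Variable R : realType.

Lemma div_mul_powR_le (t K x y : R) : 1 < t -> 1 <= x -> 1 <= y -> K <= x + y ->
  K / (x * y `^ t) <= 2 * ((x `^ t)^-1 + (y `^ t)^-1).
Proof.
move=> t1 x1 y1 Kxy.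
have x0 : 0 < x by lra.
have y0 : 0 < y by lra.
have X0 : 0 < x `^ t by apply: powR_gt0.
have Y0 : 0 < y `^ t by apply: powR_gt0.
have [yx|xy] := leP y x.
  apply: (@le_trans _ _ (2 * (y `^ t)^-1)); last by rewrite ler_pM2l // lerDr invr_ge0 ltW.
  rewrite -subr_ge0.
  have -> : 2 * (y `^ t)^-1 - K / (x * y `^ t) = (2 * x - K) / (x * y `^ t).
    by field; rewrite !gt_eqF.
  by apply: divr_ge0; [lra | rewrite mulr_ge0 // ltW].
apply: (@le_trans _ _ (2 * (x `^ t)^-1)); last by rewrite ler_pM2l // lerDl invr_ge0 ltW.
have t0 : 0 < t by lra.
rewrite -(mulr_powRB1 (ltW x0) t0) -(mulr_powRB1 (ltW y0) t0).
have Xd0 : 0 < x `^ (t - 1) by apply: powR_gt0.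
have Yd0 : 0 < y `^ (t - 1) by apply: powR_gt0.
have XY : x `^ (t - 1) <= y `^ (t - 1).
  by apply: ge0_ler_powR; rewrite ?nnegrE ?subr_ge0 ?ltW.
rewrite -subr_ge0.
have -> : 2 * (x * x `^ (t - 1))^-1 - K / (x * (y * y `^ (t - 1)))
   = (2 * y * y `^ (t - 1) - K * x `^ (t - 1)) / (x * x `^ (t - 1) * y * y `^ (t - 1)).
  by field; rewrite !gt_eqF.
rewrite divr_ge0 ?mulr_ge0 ?ltW //.
have : K <= 2 * y by lra.
nra.
Qed.

(* [xc] is the largest of the three frequencies up to the factor 3, so it
   absorbs [K^s]; the two remaining powers of [K] are split between the pairs
   [(xa, ya)] and [(xb, yb)]. *)
Lemma triple_weight_le (s t K xa xb xc ya yb yc : R) :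
  1 <= s -> 1 < t -> 0 < K ->
  1 <= xa -> 1 <= xb -> 1 <= xc -> 1 <= ya -> 1 <= yb -> 1 <= yc ->
  K <= 3 * xc -> K <= xa + ya -> K <= xb + yb ->
  K `^ (2 + s) * ((xa `^ s * xb `^ s * xc `^ s)^-1 * (ya `^ t * yb `^ t * yc `^ t)^-1)
  <= 8 * 3 `^ s * (((xa `^ t)^-1 + (ya `^ t)^-1) * (yc `^ t)^-1).
Proof.
move=> s1 t1 K0 xa1 xb1 xc1 ya1 yb1 yc1 Kc Ka Kb.
have pow_gt0 (z u : R) : 1 <= z -> 0 < z `^ u by move=> ?; apply: powR_gt0; lra.
have inv_pow_ge0 (z u : R) : 1 <= z -> 0 <= (z `^ u)^-1.
  by move=> ?; rewrite invr_ge0 ltW // pow_gt0.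
have -> : K `^ (2 + s) = K ^+ 2 * K `^ s.
  by rewrite powRD ?powR_mulrn ?ltW //; apply/implyP => _; rewrite gt_eqF.
have -> : K ^+ 2 * K `^ s * ((xa `^ s * xb `^ s * xc `^ s)^-1
                  * (ya `^ t * yb `^ t * yc `^ t)^-1)
   = (K `^ s / xc `^ s) * (K / (xa `^ s * ya `^ t)) * (K / (xb `^ s * yb `^ t))
     * (yc `^ t)^-1.
  by rewrite !invfM; ring.
have pair_le x y : 1 <= x -> 1 <= y -> K <= x + y ->
    K / (x `^ s * y `^ t) <= 2 * ((x `^ t)^-1 + (y `^ t)^-1).
  move=> x1 y1 Kxy; apply: le_trans (div_mul_powR_le t1 x1 y1 Kxy).
  rewrite ler_pM2l // lef_pV2 ?posrE ?mulr_gt0 ?pow_gt0 //; last lra.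
  by rewrite ler_pM2r ?pow_gt0 // le1r_powR.
have hc : K `^ s / xc `^ s <= 3 `^ s.
  rewrite ler_pdivrMr ?pow_gt0 // -powRM; try lra.
  by apply: ge0_ler_powR; rewrite ?nnegrE; lra.
have hb : K / (xb `^ s * yb `^ t) <= 4.
  apply: le_trans (pair_le _ _ xb1 yb1 Kb) _.
  have inv_le1 z : 1 <= z -> (z `^ t)^-1 <= 1.
    by move=> z1; rewrite invf_le1 ?pow_gt0 // (le_trans z1) // le1r_powR // ltW.
  by have := inv_le1 _ xb1; have := inv_le1 _ yb1; lra.
rewrite [leRHS](_ : _ = 3 `^ s * (2 * ((xa `^ t)^-1 + (ya `^ t)^-1)) * 4 * (yc `^ t)^-1);
  last by ring.
apply: ler_wpM2r; first exact: inv_pow_ge0.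
have hc0 : 0 <= K `^ s / xc `^ s by rewrite divr_ge0 ?powR_ge0.
have ha0 : 0 <= K / (xa `^ s * ya `^ t) by rewrite divr_ge0 ?mulr_ge0 ?powR_ge0 ?(ltW K0).
apply: ler_pM (ler_pM hc0 ha0 hc (pair_le _ _ xa1 ya1 Ka)) hb; first exact: mulr_ge0.
by rewrite divr_ge0 ?mulr_ge0 ?powR_ge0 ?(ltW K0).
Qed.

Lemma triple_weight_le_sum (s t K x1 x2 x3 y1 y2 y3 : R) :
  1 <= s -> 1 < t -> 0 < K ->
  1 <= x1 -> 1 <= x2 -> 1 <= x3 -> 1 <= y1 -> 1 <= y2 -> 1 <= y3 ->
  K <= x1 + x2 + x3 -> K <= x1 + y1 -> K <= x2 + y2 -> K <= x3 + y3 ->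
  K `^ (2 + s) * ((x1 `^ s * x2 `^ s * x3 `^ s)^-1 * (y1 `^ t * y2 `^ t * y3 `^ t)^-1)
  <= 8 * 3 `^ s * ((x2 `^ t)^-1 * (y1 `^ t)^-1 + (y2 `^ t)^-1 * (y1 `^ t)^-1
                   + (x1 `^ t)^-1 * (y2 `^ t)^-1 + (y1 `^ t)^-1 * (y2 `^ t)^-1
                   + (x1 `^ t)^-1 * (y3 `^ t)^-1 + (y1 `^ t)^-1 * (y3 `^ t)^-1).
Proof.
move=> s1 t1 K0 x11 x21 x31 y11 y21 y31 Kx K1 K2 K3.
have c0 : 0 <= 8 * 3 `^ s by rewrite mulr_ge0 ?powR_ge0.
have g0 u v : 0 <= (u `^ t)^-1 * (v `^ t)^-1 by rewrite mulr_ge0 ?invr_ge0 ?powR_ge0.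
have := g0 x2 y1; have := g0 y2 y1; have := g0 x1 y2.
have := g0 y1 y2; have := g0 x1 y3; have := g0 y1 y3.
move=> n6 n5 n4 n3 n2 n1.
case: (lerP K (3 * x1)) => [Kc|Kc1].
  have := triple_weight_le s1 t1 K0 x21 x31 x11 y21 y31 y11 Kc K2 K3.
  rewrite (mulrC (x2 `^ s * x3 `^ s)) (mulrC (y2 `^ t * y3 `^ t)).
  rewrite (mulrA (x1 `^ s)) (mulrA (y1 `^ t)).
  by move/le_trans; apply; rewrite ler_wpM2l //; lra.
case: (lerP K (3 * x2)) => [Kc|Kc2].
  have := triple_weight_le s1 t1 K0 x11 x31 x21 y11 y31 y21 Kc K1 K3.
  rewrite (mulrAC (x1 `^ s)) (mulrAC (y1 `^ t)).
  by move/le_trans; apply; rewrite ler_wpM2l //; lra.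
have Kc : K <= 3 * x3 by lra.
have := triple_weight_le s1 t1 K0 x11 x21 x31 y11 y21 y31 Kc K1 K2.
by move/le_trans; apply; rewrite ler_wpM2l //; lra.
Qed.

End PointwiseBound.

Section Majorant.
Variable R : realType.

Definition pair_map (k : int) (j : nat) (p : int * int * int) : int * int :=
  let '(k1, k2, k3) := p in
  match j with
  | 0 => (k2, k - k1) | 1 => (k - k2, k - k1)
  | 2 => (k1, k - k2) | 3 => (k - k1, k - k2)
  | 4 => (k1, k - k3) | _ => (k - k1, k - k3)
  end.

Definition majorant (t : R) (k : int) (p : int * int * int) : R :=
  \sum_(j < 6) invpow_abs t (pair_map k j p).1 * invpow_abs t (pair_map k j p).2.

Lemma pair_map_inj k j : set_inj (starset k) (pair_map k j).
Proof.
move=> [[p1 p2] p3] [[q1 q2] q3] /set_mem[hp _ _ _] /set_mem[hq _ _ _].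
by case: j => [|[|[|[|[|j]]]]] /= [e1 e2]; congr (_, _, _); lia.
Qed.

Lemma majorant_ge0 t k p : 0 <= majorant t k p.
Proof. by apply: sumr_ge0 => j _; rewrite mulr_ge0 ?invpow_abs_ge0. Qed.

Lemma summand_ge0 (a r : R) k p : 0 <= summand a r k p.
Proof.
case: p => [[k1 k2] k3].
by rewrite mulr_ge0 // divr_ge0 // ?mulr_ge0 // powR_ge0.
Qed.

Lemma esum_majorant_le t k : 1 < t ->
  (\esum_(p in starset k) (majorant t k p)%:E
    <= (6%:R * (zeta_bound t * zeta_bound t))%:E)%E.
Proof.
move=> t1; under eq_esum do rewrite /majorant -sumEFin.
rewrite esum_sum; last by move=> p j _ _; rewrite lee_fin mulr_ge0 ?invpow_abs_ge0.
apply: le_trans (_ : (\sum_(j < 6) (zeta_bound t * zeta_bound t)%:E <= _)%E).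
  by apply: lee_sum => j _; exact: esum_invpow_abs_pair_le t1 (@pair_map_inj k j).
by rewrite sumEFin sumr_const card_ord mulr_natl.
Qed.

Lemma norm_intr_ge1 (z : int) : z != 0 -> 1 <= `|z%:~R : R|.
Proof. by move=> z0; rewrite -intr_norm ler1z; lia. Qed.

Lemma norm_intr_le_add (k u : int) : `|k%:~R : R| <= `|u%:~R : R| + `|(k - u)%:~R : R|.
Proof.
have -> : k%:~R = u%:~R + (k - u)%:~R :> R by rewrite -intrD addrC subrK.
exact: ler_normD.
Qed.

Lemma summand_le_majorant (a r : R) (k : int) p : 1 / 2 <= a -> 1 / 2 < r -> k != 0 ->
  starset k p ->
  `|k%:~R : R| `^ (2 + 2 * a) * summand a r k p <= 8 * 3 `^ (2 * a) * majorant (2 * r) k p.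
Proof.
move=> ha hr k0; case: p => [[k1 k2] k3] [hs hp h2 h3].
set s := 2 * a; set t := 2 * r.
have s1 : 1 <= s by rewrite /s; lra.
have t1 : 1 < t by rewrite /t; lra.
move: hp; rewrite !mulf_eq0 !negb_or => /andP[/andP[k10 k20] k30].
(* For [k1 = k] the factor [|k - k1|^t] vanishes and [1 / 0 = 0]. *)
have [->|k1k] := eqVneq k1 k.
  rewrite /summand subrr normr0 powR0 ?gt_eqF ?(lt_trans ltr01 t1) //.
  by rewrite !mul0r div1r invr0 !mulr0 mulr_ge0 ?powR_ge0 ?majorant_ge0.
rewrite /majorant !big_ord_recr big_ord0 /= /invpow_abs add0r.
rewrite /summand !intrM !normrM !powRM ?normr_ge0 ?mulr_ge0 // !div1r -/s -/t.
set K : R := `|k%:~R|.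
set x1 : R := `|k1%:~R|; set x2 : R := `|k2%:~R|; set x3 : R := `|k3%:~R|.
set y1 : R := `|(k - k1)%:~R|; set y2 : R := `|(k - k2)%:~R|; set y3 : R := `|(k - k3)%:~R|.
have K0 : 0 < K by rewrite normr_gt0 intr_eq0.
have x11 : 1 <= x1 by apply: norm_intr_ge1.
have x21 : 1 <= x2 by apply: norm_intr_ge1.
have x31 : 1 <= x3 by apply: norm_intr_ge1.
have y11 : 1 <= y1 by apply: norm_intr_ge1; rewrite subr_eq0 eq_sym.
have y21 : 1 <= y2 by apply: norm_intr_ge1; rewrite subr_eq0 eq_sym.
have y31 : 1 <= y3 by apply: norm_intr_ge1; rewrite subr_eq0 eq_sym.
have K1 : K <= x1 + y1 by apply: norm_intr_le_add.
have K2 : K <= x2 + y2 by apply: norm_intr_le_add.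
have K3 : K <= x3 + y3 by apply: norm_intr_le_add.
have Kx : K <= x1 + x2 + x3.
  by rewrite /K -hs !intrD (le_trans (ler_normD _ _)) // lerD2r ler_normD.
exact: triple_weight_le_sum.
Qed.

End Majorant.

Theorem mainTheorem11 (R : realType) (a r : R) :
  1 / 2 <= a -> 1 / 2 < r ->
  exists C : R, forall k : int, k != 0 ->
    ((`|k%:~R : R| `^ (2 + 2 * a))%:E
       * (\esum_(p in starset k) (summand a r k p)%:E) <= C%:E)%E.
Proof.
move=> ha hr; set c := 8 * 3 `^ (2 * a).
have t1 : 1 < 2 * r by lra.
have c0 : 0 <= c by rewrite mulr_ge0 ?powR_ge0.
exists (c * (6%:R * (zeta_bound (2 * r) * zeta_bound (2 * r)))) => k k0.
rewrite -ge0_esumZl ?powR_ge0 //; last by move=> p; rewrite lee_fin summand_ge0.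
apply: (@le_trans _ _ (\esum_(p in starset k) (c%:E * (majorant (2 * r) k p)%:E))%E).
  apply: le_esum => p kp; rewrite -!EFinM lee_fin.
  exact: summand_le_majorant.
rewrite ge0_esumZl //; last by move=> p; rewrite lee_fin majorant_ge0.
by rewrite (EFinM c); apply: lee_wpmul2l; rewrite ?lee_fin // esum_majorant_le.
Qed.
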